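(* Let $X$ be a topological space, let $Y$ be a functionally closed subset of $X$, let $(g,h)$ be a countable pair of Hahn on $X$, and let $f_0:X\to\overline{\mathbb R}$ be a continuous function such that $g(y)\le f_0(y)\le h(y)$ for all $y\in Y$. Then there exists a continuous function $f:X\to\overline{\mathbb R}$ such that $f(y)=f_0(y)$ for all $y\in Y$ and $g(x)\le f(x)\le h(x)$ for all $x\in X$.
   Context: $\overline{\mathbb R}=[-\infty,+\infty]$ with the order topology. A set $A\subseteq X$ is functionally closed if $A=\alpha^{-1}(0)$ for some continuous $\alpha:X\to[0,1]$. A pair $(g,h)$ of functions $g,h:X\to\overline{\mathbb R}$ is a countable pair of Hahn if there are continuous functions $g_n,h_n:X\to\overline{\mathbb R}$ ($n\in\mathbb N$) such that $g(x)=\inf_{n\in\mathbb N}g_n(x)\le\sup_{n\in\mathbb N}h_n(x)=h(x)$ for every $x\in X$. *)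

From HB Require Import structures.
From mathcomp Require Import all_boot all_order all_algebra.
From mathcomp Require Import all_classical all_reals all_analysis.
Set Implicit Arguments. Unset Strict Implicit. Unset Printing Implicit Defensive.
Import Order.TTheory GRing.Theory Num.Theory.
Import numFieldNormedType.Exports.
Local Open Scope classical_set_scope.
Local Open Scope ring_scope.

Definition functionally_closed (R : realType) (X : topologicalType) (A : set X) : Prop :=
  exists alpha : X -> R, continuous alpha /\ (forall x, 0 <= alpha x <= 1) /\
    A = alpha @^-1` [set 0].

Definition countable_Hahn_pair (R : realType) (X : topologicalType)
    (g h : X -> \bar R) : Prop :=
  exists (gn hn : nat -> X -> \bar R),
    (forall n, continuous (gn n)) /\ (forall n, continuous (hn n)) /\
    forall x, [/\ g x = ereal_inf (range (fun n => gn n x)),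
                 h x = ereal_sup (range (fun n => hn n x)) & (g x <= h x)%E].

(* Via [contract] everything takes place in [-1, 1]. The infimum l of countably
   many continuous functions has functionally closed upper level sets
   {t <= l} (countably many zero sets intersect in a zero set), and dually
   the supremum u has functionally closed lower level sets {u <= s}. For
   s < t these two zero sets are disjoint when l <= u, hence completely
   separated; adding the separating functions along a grid of mesh eps gives
   a continuous f with l - eps <= f <= u + eps. Repeating this inside the band
   [max l (f - 2 eps), min u (f + 2 eps)] with eps = 2^-k produces a uniformly
   Cauchy sequence whose limit lies between l and u. The condition on the zero
   set Y is imposed by replacing l and u by f0 on Y: since l <= f0 <= u on Y,
   the level sets only change by intersections with Y, so they stay
   functionally closed. *)

From mathcomp Require Import all_boot all_order all_algebra.
From mathcomp Require Import all_classical all_reals all_analysis.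
From mathcomp Require Import lra.

Set Implicit Arguments.
Unset Strict Implicit.
Unset Printing Implicit Defensive.

Import Order.TTheory GRing.Theory Num.Theory.
Import numFieldNormedType.Exports.

Section contract_expand.
Context {R : realType}.
Local Open Scope classical_set_scope.
Local Open Scope ring_scope.

Lemma contract_continuous : continuous (@contract R).
Proof.
move=> x; apply/cvgrPdist_lt => e e0.
by apply: filterS (@nbhsx_ballx _ (\bar R) x e e0) => y; rewrite /ball /= /ereal_ball.
Qed.

Lemma contract_expand (r : R) : contract (expand r) = Num.max (-1) (Num.min 1 r).
Proof.
have [r1|r1] := lerP 1 r; first by rewrite expand1 //= max_r //; lra.
have [rN1|rN1] := lerP r (-1); first by rewrite expandN1 //= max_l.
by rewrite expandK ?inE // ler_norml !ltW.
Qed.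

Lemma expand_continuous : continuous (@expand R).
Proof.
move=> r; apply/cvg_ballP => e e0.
apply: filterS (@nbhsx_ballx _ R r e e0) => s.
rewrite /ball /= /ereal_ball !contract_expand; apply: le_lt_trans.
have := ler_norm (r - s); have := ler_norm (s - r); rewrite distrC ler_norml => ? ?.
repeat match goal with |- context[Num.min ?a ?b] => case: (lerP a b) => ?
  | |- context[Num.max ?a ?b] => case: (lerP a b) => ? end.
all: apply/andP; split; lra.
Qed.

Lemma contract_ge_N1 (y : \bar R) : -1 <= contract y.
Proof. by have /andP[] : -1 <= contract y <= 1 by rewrite -ler_norml contract_le1. Qed.

Lemma contract_le_1 (y : \bar R) : contract y <= 1.
Proof. by have /andP[] : -1 <= contract y <= 1 by rewrite -ler_norml contract_le1. Qed.

Lemma le_contract_ereal_inf (S : set (\bar R)) (t : R) : S !=set0 ->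
  t <= contract (ereal_inf S) <-> forall y, S y -> t <= contract y.
Proof.
move=> S0; rewrite contract_inf //; split => [tS y Sy|tS].
  apply: le_trans tS (ge_inf _ _); last by exists y.
  by exists (-1) => _ [z _ <-]; exact: contract_ge_N1.
by apply: lb_le_inf => [|_ [y Sy <-]]; [exact: image_nonempty|exact: tS].
Qed.

Lemma ge_contract_ereal_sup (S : set (\bar R)) (s : R) : S !=set0 ->
  contract (ereal_sup S) <= s <-> forall y, S y -> contract y <= s.
Proof.
move=> S0; rewrite contract_sup //; split => [Ss y Sy|Ss].
  apply: le_trans Ss; apply: ub_le_sup; last by exists y.
  by exists 1 => _ [z _ <-]; exact: contract_le_1.
by apply: ge_sup => [|_ [y Sy <-]]; [exact: image_nonempty|exact: Ss].
Qed.

End contract_expand.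

Section clamp.
Context {R : realType}.
Local Open Scope ring_scope.

Definition clamp (e z : R) : R := Num.min e (Num.max 0 z).

Lemma clamp_ge0 (e z : R) : 0 <= e -> 0 <= clamp e z.
Proof. by move=> e0; rewrite /clamp le_min e0 le_max lexx. Qed.

Lemma clamp_le (e z : R) : clamp e z <= e.
Proof. by rewrite /clamp ge_min lexx. Qed.

Lemma le_clamp (e z : R) : z <= e -> z <= clamp e z.
Proof. by move=> ze; rewrite /clamp le_min ze le_max lexx orbT. Qed.

Lemma clamp_sat (e z : R) : e <= z -> clamp e z = e.
Proof. by move=> ez; rewrite /clamp min_l // le_max ez orbT. Qed.

Lemma clamp_le_id (e z : R) : 0 <= z -> clamp e z <= z.
Proof. by move=> z0; rewrite /clamp ge_min max_r // lexx orbT. Qed.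

Lemma clamp_eq0 (e z : R) : 0 < e -> (clamp e z == 0) = (z <= 0).
Proof.
move=> e0; rewrite /clamp; case: (lerP z 0) => z0.
  by rewrite min_r ?ltW // eqxx.
by case: (lerP e z) => _; rewrite gt_eqF.
Qed.

Lemma clampD (e d z : R) : 0 <= e -> 0 <= d ->
  clamp e z + clamp d (z - e) = clamp (e + d) z.
Proof.
rewrite /clamp => e0 d0.
case: (lerP 0 z) => ?; case: (lerP 0 (z - e)) => ?.
all: repeat match goal with |- context[Num.min ?a ?b] => case: (lerP a b) => ? end.
all: lra.
Qed.

Lemma sum_clamp (e z : R) (K : nat) : 0 <= e ->
  \sum_(j < K) clamp e (z - j%:R * e) = clamp (K%:R * e) z.
Proof.
move=> e0; elim: K => [|K IH].
  by rewrite big_ord0 mul0r /clamp min_l // le_max lexx.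
by rewrite big_ord_recr /= IH clampD ?mulr_ge0 // -natr1 mulrDl mul1r.
Qed.

Lemma staircase_sum (s : nat -> R) (m eps lx ux : R) (K : nat) :
  0 < eps -> (forall j, 0 <= s j <= 1) ->
  (forall j, m + j.+1%:R * eps <= lx -> s j = 1) ->
  (forall j, ux <= m + j%:R * eps -> s j = 0) ->
  m <= ux -> lx <= m + K%:R * eps ->
  lx - eps <= m + \sum_(j < K) eps * s j <= ux + eps.
Proof.
move=> eps0 s01 s1 s0 m_ux lx_K.
have lower : \sum_(j < K) clamp eps (lx - m - eps - j%:R * eps) <= \sum_(j < K) eps * s j.
  apply: ler_sum => j _; have /andP[sj0 _] := s01 j.
  have [lx_big|lx_small] := lerP (m + j.+1%:R * eps) lx.
    by rewrite s1 // mulr1 clamp_le.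
  have /eqP -> : clamp eps (lx - m - eps - j%:R * eps) == 0.
    by rewrite clamp_eq0 //; move: lx_small; rewrite -natr1 mulrDl mul1r; lra.
  by rewrite mulr_ge0 // ltW.
have upper : \sum_(j < K) eps * s j <= \sum_(j < K) clamp eps (ux - m + eps - j%:R * eps).
  apply: ler_sum => j _; have /andP[_ sj1] := s01 j.
  have [ux_small|ux_big] := lerP ux (m + j%:R * eps).
    by rewrite s0 // mulr0 clamp_ge0 // ltW.
  by rewrite clamp_sat; [exact: ler_piMr (ltW eps0) sj1|lra].
move: lower upper; rewrite !sum_clamp ?(ltW eps0) // => lower upper.
have := @le_clamp (K%:R * eps) (lx - m - eps).
have := @clamp_le_id (K%:R * eps) (ux - m + eps).
move=> ub lb; apply/andP; split; [have := lb _|have := ub _]; lra.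
Qed.

Lemma continuous_clamp {X : topologicalType} (e : R) (f : X -> R) :
  continuous f -> continuous (fun x => clamp e (f x)).
Proof.
move=> fc x; rewrite /clamp.
apply: (@continuous_min _ _ (fun=> e) (fun x => Num.max 0 (f x))).
  exact: cst_continuous.
by apply: (@continuous_max _ _ (fun=> 0) f); [exact: cst_continuous|exact: fc].
Qed.

End clamp.

Section uniform_limits.
Context {R : realType} {X : topologicalType}.
Local Open Scope classical_set_scope.
Local Open Scope ring_scope.

Lemma continuous_uniform_limit (S : X -> R) (F : nat -> X -> R) (e : R ^nat) :
  (forall k, continuous (F k)) -> e @ \oo --> 0 ->
  (forall k x, `|S x - F k x| <= e k) -> continuous S.
Proof.
move=> Fc e0 FS; apply: (@uniform_limit_continuous _ _ (F @ \oo)).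
  exact: (@nearW _ \oo (fun k => continuous (F k))).
move=> P /uniform_nbhs[E [+ EP]]; rewrite -entourage_ballE => -[eps /= eps0 epsE].
near=> k; apply: EP => y _; apply: epsE; rewrite /ball /=.
by apply: le_lt_trans (FS k y) _; near: k; exact: cvgr_lt 0 e0 _ eps0.
Unshelve. all: by end_near.
Qed.

Lemma continuous_sum_scaled (c : nat -> R) (f : nat -> X -> R) (K : nat) :
  (forall j, continuous (f j)) -> continuous (fun x => \sum_(j < K) c j * f j x).
Proof.
move=> fc; apply: continuous_big => [|j _ x]; first exact: add_continuous.
exact: continuousM (@cst_continuous _ _ _ x) (fc j x).
Qed.

Lemma ler_add_cvg0 (a b : R) (e : R ^nat) :
  e @ \oo --> 0 -> (forall k, a <= b + e k) -> a <= b.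
Proof.
move=> e0 abe; apply/ler_addgt0Pr => eps eps0.
have [k _ /(_ k (leqnn k)) /= ek] := cvgr_lt 0 e0 _ eps0.
by apply: le_trans (abe k) _; rewrite lerD2l ltW.
Qed.

Lemma adjacent_continuous_limit (lo : nat -> X -> R) (e : R ^nat) :
  (forall k, continuous (lo k)) -> e @ \oo --> 0 ->
  (forall k x, lo k x <= lo k.+1 x) ->
  (forall k x, lo k.+1 x + e k.+1 <= lo k x + e k) ->
  exists S : X -> R, continuous S /\ forall k x, lo k x <= S x <= lo k x + e k.
Proof.
move=> loc e0 lo_incr hi_decr.
have bounds x k : lo k x <= limn (lo^~ x) <= lo k x + e k.
  pose hi k := lo k x + e k.
  have lo_nd : nondecreasing_seq (lo^~ x) := (nondecreasing_seqP _).1 (lo_incr^~ x).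
  have hi_ni : nonincreasing_seq hi := (nonincreasing_seqP _).1 (hi_decr^~ x).
  have gap : hi - lo^~ x = e by apply/funext => n; rewrite /hi /= addrAC subrr add0r.
  have := adjacent_seq lo_nd hi_ni; rewrite gap => /(_ e0)[lim_eq lo_cvg hi_cvg].
  rewrite nondecreasing_cvgn_le //= -lim_eq; exact: nonincreasing_cvgn_ge.
exists (fun x => limn (lo^~ x)); split => //.
apply: (continuous_uniform_limit loc e0) => k x.
by have /andP[] := bounds x k; rewrite ler_norml; lra.
Qed.

End uniform_limits.

Lemma dependent_choice_nat (T : Type) (P : nat -> T -> Prop)
    (Q : nat -> T -> T -> Prop) (x0 : T) :
  P 0%N x0 -> (forall k x, P k x -> exists y, P k.+1 y /\ Q k x y) ->
  exists s : nat -> T, forall k, P k (s k) /\ Q k (s k) (s k.+1).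
Proof.
move=> P0 step.
have /choice[next nextP] : forall kx : nat * T,
    exists y, P kx.1 kx.2 -> P kx.1.+1 y /\ Q kx.1 kx.2 y.
  move=> [k x]; have [/step[y]|] := pselect (P k x); first by exists y.
  by exists x.
pose s k := iteri k (fun k x => next (k, x)) x0.
have Ps k : P k (s k) by elim: k => // k IH; exact: (nextP (k, s k) IH).1.
by exists s => k; split => //; exact: (nextP (k, s k) (Ps k)).2.
Qed.

Section functionally_closed.
Context {R : realType} {X : topologicalType}.
Local Open Scope classical_set_scope.
Local Open Scope ring_scope.

Lemma continuous_common_zero (a : nat -> X -> R) :
  (forall n, continuous (a n)) -> (forall n x, 0 <= a n x <= 1) ->
  exists S : X -> R, continuous S /\
    forall x, 0 <= S x <= 1 /\ (S x = 0 <-> forall n, a n x = 0).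
Proof.
move=> ac a01; pose e k : R := 2^-1 ^+ k.
have e_gt0 k : 0 < e k by rewrite exprn_gt0.
have eS k : e k.+1 = e k / 2 by rewrite /e exprSr.
have e_cvg0 : e @ \oo --> 0 by apply: cvg_expr; rewrite gtr0_norm // invf_lt1 // ltr1n.
pose w n x := e n.+1 * a n x.
have w_ge0 n x : 0 <= w n x.
  by have /andP[a0 _] := a01 n x; rewrite /w mulr_ge0 // ltW.
have w_le n x : w n x <= e n.+1.
  by have /andP[_ a1] := a01 n x; rewrite /w ler_piMr // ltW.
pose lo k x := \sum_(n < k) w n x.
have loS k x : lo k.+1 x = lo k x + w k x by rewrite /lo big_ord_recr.
have lo_cont k : continuous (lo k).
  exact: (continuous_sum_scaled (c := fun n => e n.+1) ac).
have lo_incr k x : lo k x <= lo k.+1 x by rewrite loS lerDl.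
have hi_decr k x : lo k.+1 x + e k.+1 <= lo k x + e k.
  by rewrite loS; have := w_le k x; rewrite !eS; lra.
have [S [Sc Sb]] := adjacent_continuous_limit lo_cont e_cvg0 lo_incr hi_decr.
exists S; split => // x; split.
  by have := Sb 0%N x; rewrite /lo big_ord0 /e expr0 add0r.
split => [S0 n|a0].
  have : w n x = 0.
    have := Sb n.+1 x; rewrite S0 loS => /andP[+ _].
    have lo_ge0 : 0 <= lo n x by apply: sumr_ge0.
    by have := w_ge0 n x; lra.
  by move/eqP; rewrite mulf_eq0 gt_eqF //= => /eqP.
have lo0 k : lo k x = 0 by rewrite /lo big1 // => n _; rewrite /w a0 mulr0.
apply/eqP; rewrite eq_le; have := Sb 0%N x; rewrite lo0 => /andP[-> _].
by rewrite andbT; apply: (ler_add_cvg0 e_cvg0) => k; have := Sb k x; rewrite lo0 => /andP[].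
Qed.

Lemma functionally_closed_le (c d : X -> R) :
  continuous c -> continuous d -> functionally_closed R [set x | c x <= d x].
Proof.
move=> cc dc; exists (fun x => clamp 1 (c x - d x)); split.
  by apply: continuous_clamp => x; exact: (continuousB (cc x) (dc x)).
split=> [x|]; first by rewrite clamp_ge0 ?clamp_le.
by apply/seteqP; split => x /=; rewrite -subr_le0 -(clamp_eq0 _ ltr01) => /eqP.
Qed.

Lemma functionally_closedU (A B : set X) : functionally_closed R A ->
  functionally_closed R B -> functionally_closed R (A `|` B).
Proof.
move=> [a [ac [a01 ->]]] [b [bc [b01 ->]]].
exists (fun x => a x * b x); split; first by move=> x; exact: (continuousM (ac x) (bc x)).
split=> [x|].
  have /andP[a0 a1] := a01 x; have /andP[b0 b1] := b01 x.
  by rewrite mulr_ge0 // mulr_ile1.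
apply/seteqP; split => x /=; first by case=> ->; rewrite ?mul0r ?mulr0.
by move/eqP; rewrite mulf_eq0 => /orP[]/eqP; [left|right].
Qed.

Lemma functionally_closedI (A B : set X) : functionally_closed R A ->
  functionally_closed R B -> functionally_closed R (A `&` B).
Proof.
move=> [a [ac [a01 ->]]] [b [bc [b01 ->]]].
exists (fun x => Num.max (a x) (b x)); split.
  by move=> x; exact: (continuous_max (ac x) (bc x)).
split=> [x|].
  have /andP[a0 a1] := a01 x; have /andP[b0 b1] := b01 x.
  by rewrite le_max a0 ge_max a1 b1.
apply/seteqP; split => x /=; first by case=> -> ->; rewrite maxxx.
move=> ab0; have /andP[a0 _] := a01 x; have /andP[b0 _] := b01 x.
have /andP[a_le0 b_le0] : (a x <= 0) && (b x <= 0) by rewrite -ge_max ab0.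
by split; apply/eqP; rewrite eq_le ?a_le0 ?b_le0.
Qed.

Lemma functionally_closed_bigcap (A : nat -> set X) :
  (forall n, functionally_closed R (A n)) ->
  functionally_closed R (\bigcap_n A n).
Proof.
move=> /choice[a aP]; have [S [Sc SP]] := @continuous_common_zero a
  (fun n => (aP n).1) (fun n => (aP n).2.1).
exists S; split => //; split => [x|]; first exact: (SP x).1.
apply/seteqP; split => x /=.
  by move=> Ax; apply/(SP x).2 => n; have := Ax n I; rewrite (aP n).2.2.
by move=> /(SP x).2 a0 n _; rewrite (aP n).2.2; exact: a0.
Qed.

Lemma functionally_closed_separation (A B : set X) :
  functionally_closed R A -> functionally_closed R B -> A `&` B = set0 ->
  exists s : X -> R, continuous s /\
    forall x, 0 <= s x <= 1 /\ (A x -> s x = 1) /\ (B x -> s x = 0).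
Proof.
move=> [a [ac [a01 ->]]] [b [bc [b01 ->]]] AB0.
have a0 x : 0 <= a x by case/andP: (a01 x).
have b0 x : 0 <= b x by case/andP: (b01 x).
have ab_gt0 x : 0 < a x + b x.
  rewrite lt_def addr_ge0 // andbT paddr_eq0 //; apply/negP => /andP[/eqP ax /eqP bx].
  by have : (set0 : set X) x by rewrite -AB0.
exists (fun x => b x / (a x + b x)); split.
  move=> x; apply: continuousM (bc x) _; apply: continuousV.
    by rewrite gt_eqF.
  exact: (continuousD (ac x) (bc x)).
move=> x; split.
  by rewrite divr_ge0 ?(ltW (ab_gt0 x)) //= ler_pdivrMr // mul1r lerDr.
split=> [/= ax0|/= ->]; last by rewrite mul0r.
by have := ab_gt0 x; rewrite ax0 add0r => b_gt0; rewrite divff // gt_eqF.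
Qed.

End functionally_closed.

Section semicontinuity.
Context {R : realType} {X : topologicalType}.
Local Open Scope classical_set_scope.
Local Open Scope ring_scope.

(* The only property of countable infima of continuous functions that the
   insertion argument uses. *)
Definition functionally_usc (l : X -> R) :=
  forall t, functionally_closed R [set x | t <= l x].

Definition functionally_lsc (u : X -> R) :=
  forall s, functionally_closed R [set x | u x <= s].

Lemma functionally_usc_inf (a : nat -> X -> R) (l : X -> R) :
  (forall n, continuous (a n)) ->
  (forall x t, t <= l x <-> forall n, t <= a n x) -> functionally_usc l.
Proof.
move=> ac l_inf t.
have -> : [set x | t <= l x] = \bigcap_n [set x | t <= a n x].
  apply/seteqP; split => x /=; first by move=> /(l_inf x t) ta n _; exact: ta.
  by move=> ta; apply/(l_inf x t) => n; exact: ta.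
apply: functionally_closed_bigcap => n.
by apply: functionally_closed_le; [exact: cst_continuous|exact: ac].
Qed.

Lemma functionally_lsc_sup (a : nat -> X -> R) (u : X -> R) :
  (forall n, continuous (a n)) ->
  (forall x s, u x <= s <-> forall n, a n x <= s) -> functionally_lsc u.
Proof.
move=> ac u_sup s.
have -> : [set x | u x <= s] = \bigcap_n [set x | a n x <= s].
  apply/seteqP; split => x /=; first by move=> /(u_sup x s) as_ n _; exact: as_.
  by move=> as_; apply/(u_sup x s) => n; exact: as_.
apply: functionally_closed_bigcap => n.
by apply: functionally_closed_le; [exact: ac|exact: cst_continuous].
Qed.

Lemma functionally_usc_max (l c : X -> R) : functionally_usc l ->
  continuous c -> functionally_usc (fun x => Num.max (l x) (c x)).
Proof.
move=> lusc cc t.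
have -> : [set x | t <= Num.max (l x) (c x)] = [set x | t <= l x] `|` [set x | t <= c x].
  by apply/seteqP; split => x /=; rewrite le_max => /orP.
apply: functionally_closedU (lusc t) _.
by apply: functionally_closed_le => //; exact: cst_continuous.
Qed.

Lemma functionally_lsc_min (u c : X -> R) : functionally_lsc u ->
  continuous c -> functionally_lsc (fun x => Num.min (u x) (c x)).
Proof.
move=> ulsc cc s.
have -> : [set x | Num.min (u x) (c x) <= s] = [set x | u x <= s] `|` [set x | c x <= s].
  by apply/seteqP; split => x /=; rewrite ge_min => /orP.
apply: functionally_closedU (ulsc s) _.
by apply: functionally_closed_le => //; exact: cst_continuous.
Qed.

Lemma functionally_usc_patch (Y : set X) (F0 l : X -> R) :
  functionally_closed R Y -> continuous F0 -> functionally_usc l ->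
  (forall y, Y y -> l y <= F0 y) ->
  functionally_usc (fun x => if x \in Y then F0 x else l x).
Proof.
move=> Yfc F0c lusc lF0 t.
have -> : [set x | t <= if x \in Y then F0 x else l x] =
    [set x | t <= l x] `|` (Y `&` [set x | t <= F0 x]).
  apply/seteqP; split => x /=; case: ifPn => [/set_mem Yx|/negP xY].
  - by right.
  - by left.
  - by case=> [tl|[]//]; exact: le_trans tl (lF0 x Yx).
  - by case=> [//|[Yx _]]; case: xY; exact: mem_set.
apply: functionally_closedU (lusc t) (functionally_closedI Yfc _).
by apply: functionally_closed_le => //; exact: cst_continuous.
Qed.

Lemma functionally_lsc_patch (Y : set X) (F0 u : X -> R) :
  functionally_closed R Y -> continuous F0 -> functionally_lsc u ->
  (forall y, Y y -> F0 y <= u y) ->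
  functionally_lsc (fun x => if x \in Y then F0 x else u x).
Proof.
move=> Yfc F0c ulsc F0u s.
have -> : [set x | (if x \in Y then F0 x else u x) <= s] =
    [set x | u x <= s] `|` (Y `&` [set x | F0 x <= s]).
  apply/seteqP; split => x /=; case: ifPn => [/set_mem Yx|/negP xY].
  - by right.
  - by left.
  - by case=> [us|[]//]; exact: le_trans (F0u x Yx) us.
  - by case=> [//|[Yx _]]; case: xY; exact: mem_set.
apply: functionally_closedU (ulsc s) (functionally_closedI Yfc _).
by apply: functionally_closed_le => //; exact: cst_continuous.
Qed.

End semicontinuity.

Section approximation.
Context {R : realType} {X : topologicalType}.
Local Open Scope classical_set_scope.
Local Open Scope ring_scope.

Variables (l u : X -> R) (m M : R).
Hypotheses (lusc : functionally_usc l) (ulsc : functionally_lsc u).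
Hypotheses (lu : forall x, l x <= u x) (ml : forall x, m <= l x) (uM : forall x, u x <= M).

Lemma approximate_insertion (eps : R) : 0 < eps ->
  exists f : X -> R, continuous f /\ forall x, l x - eps <= f x <= u x + eps.
Proof.
move=> eps0; pose K := Num.bound `|(M - m) / eps|.
have MK : M <= m + K%:R * eps.
  have := archi_boundP (normr_ge0 ((M - m) / eps)).
  by move=> /(le_lt_trans (ler_norm _)); rewrite ltr_pdivrMr // => ?; lra.
have separator j : exists s : X -> R, continuous s /\ forall x, 0 <= s x <= 1 /\
    (m + j.+1%:R * eps <= l x -> s x = 1) /\ (u x <= m + j%:R * eps -> s x = 0).
  apply: functionally_closed_separation (lusc _) (ulsc _) _.
  apply/seteqP; split => // x [/= lx ux]; have := lu x.
  by move: lx; rewrite -natr1 mulrDl mul1r; lra.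
have /choice[s sP] := separator.
exists (fun x => m + \sum_(j < K) eps * s j x); split.
  move=> x; apply: continuousD (@cst_continuous _ _ _ x) _.
  exact: (continuous_sum_scaled (c := fun=> eps) (fun j => (sP j).1)).
move=> x; apply: (staircase_sum (s := fun j => s j x)) => // [j|j|j||].
- by have [] := (sP j).2 x.
- by have [_ []] := (sP j).2 x.
- by have [_ []] := (sP j).2 x.
- exact: le_trans (ml x) (lu x).
- exact: le_trans (le_trans (lu x) (uM x)) MK.
Qed.

End approximation.

Section exact_insertion.
Context {R : realType} {X : topologicalType}.
Local Open Scope classical_set_scope.
Local Open Scope ring_scope.

Variables (l u : X -> R) (m M : R).
Hypotheses (lusc : functionally_usc l) (ulsc : functionally_lsc u).
Hypotheses (lu : forall x, l x <= u x) (ml : forall x, m <= l x) (uM : forall x, u x <= M).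

Lemma insertion_step (f : X -> R) (d : R) : 0 < d -> continuous f ->
  (forall x, l x - 2 * d <= f x <= u x + 2 * d) ->
  exists g : X -> R, continuous g /\
    forall x, l x - d <= g x <= u x + d /\ `|g x - f x| <= 3 * d.
Proof.
move=> d0 fc lfu.
have fc_shift (c : R) : continuous (fun x => f x + c).
  by move=> x; exact: continuousD (fc x) (@cst_continuous _ _ c x).
pose l' x := Num.max (l x) (f x - 2 * d).
pose u' x := Num.min (u x) (f x + 2 * d).
have l'u' x : l' x <= u' x.
  have := lfu x; have := lu x; rewrite /l' /u' le_min !ge_max => ? ?.
  by apply/andP; split; apply/andP; split; lra.
have ml' x : m <= l' x by rewrite le_max ml.
have u'M x : u' x <= M by rewrite ge_min uM.
have [g [gc lgu]] := approximate_insertion (functionally_usc_max lusc (fc_shift _))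
  (functionally_lsc_min ulsc (fc_shift _)) l'u' ml' u'M d0.
exists g; split => // x; have /andP[l'g gu'] := lgu x.
have [l_l' fd_l'] : l x <= l' x /\ f x - 2 * d <= l' x.
  by split; rewrite le_max lexx ?orbT.
have [u'_u u'_fd] : u' x <= u x /\ u' x <= f x + 2 * d.
  by split; rewrite ge_min lexx ?orbT.
move: l'g gu' l_l' fd_l' u'_u u'_fd; rewrite /l' /u' => *.
by rewrite ler_norml; split; apply/andP; split; lra.
Qed.

Lemma functionally_insertion :
  exists f : X -> R, continuous f /\ forall x, l x <= f x <= u x.
Proof.
pose d k : R := 2^-1 ^+ k.
have d_gt0 k : 0 < d k by rewrite exprn_gt0.
have dS k : d k = 2 * d k.+1 by rewrite /d exprSr; lra.
have cvg_d (c : R) : (fun k => c * d k) @ \oo --> 0.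
  by apply: cvg_geometric; rewrite gtr0_norm // invf_lt1 // ltr1n.
pose P k (f : X -> R) := continuous f /\ forall x, l x - d k <= f x <= u x + d k.
pose Q k (f g : X -> R) := forall x, `|g x - f x| <= 3 * d k.+1.
have [f0 [f0c f0b]] := approximate_insertion lusc ulsc lu ml uM (d_gt0 0%N).
have [s sPQ] : exists s : nat -> X -> R, forall k, P k (s k) /\ Q k (s k) (s k.+1).
  apply: (dependent_choice_nat (x0 := f0)) => // k f [fc fb].
  have fb' x : l x - 2 * d k.+1 <= f x <= u x + 2 * d k.+1 by rewrite -dS.
  have [g [gc gb]] := insertion_step (d_gt0 k.+1) fc fb'.
  by exists g; split; [split => // x|move=> x]; have [] := gb x.
(* Since |s k.+1 - s k| <= 3 d k.+1, the lower ends s k - 3 d k increase and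
   the upper ends s k + 3 d k decrease. *)
pose lo k x := s k x - 3 * d k.
have lo_cont k : continuous (lo k).
  by move=> x; exact: continuousB ((sPQ k).1.1 x) (@cst_continuous _ _ _ x).
have lo_incr k x : lo k x <= lo k.+1 x.
  by have := (sPQ k).2 x; rewrite /lo ler_norml (dS k) => /andP[]; lra.
have hi_decr k x : lo k.+1 x + 6 * d k.+1 <= lo k x + 6 * d k.
  by have := (sPQ k).2 x; rewrite /lo ler_norml (dS k) => /andP[]; lra.
have [S [Sc Sb]] := adjacent_continuous_limit lo_cont (cvg_d 6) lo_incr hi_decr.
exists S; split => // x; apply/andP; split.
  apply: (ler_add_cvg0 (cvg_d 4)) => k.
  by have := Sb k x; have := (sPQ k).1.2 x; rewrite /lo => /andP[] ? ? /andP[]; lra.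
apply: (ler_add_cvg0 (cvg_d 4)) => k.
by have := Sb k x; have := (sPQ k).1.2 x; rewrite /lo => /andP[] ? ? /andP[]; lra.
Qed.

End exact_insertion.

Section insertion_extension.
Context {R : realType} {X : topologicalType}.
Local Open Scope classical_set_scope.
Local Open Scope ring_scope.

Lemma functionally_insertion_extension (Y : set X) (F0 l u : X -> R) (m M : R) :
  functionally_closed R Y -> continuous F0 ->
  functionally_usc l -> functionally_lsc u -> (forall x, l x <= u x) ->
  (forall x, m <= l x) -> (forall x, u x <= M) ->
  (forall y, Y y -> l y <= F0 y <= u y) ->
  exists f : X -> R, continuous f /\ (forall y, Y y -> f y = F0 y) /\
    forall x, l x <= f x <= u x.
Proof.
move=> Yfc F0c lusc ulsc lu ml uM lF0u.
pose l' x := if x \in Y then F0 x else l x.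
pose u' x := if x \in Y then F0 x else u x.
have l'u' x : l' x <= u' x by rewrite /l' /u'; case: ifP.
have ml' x : m <= l' x.
  rewrite /l'; case: ifPn => [/set_mem Yx|_] //.
  by have /andP[lF _] := lF0u x Yx; exact: le_trans (ml x) lF.
have u'M x : u' x <= M.
  rewrite /u'; case: ifPn => [/set_mem Yx|_] //.
  by have /andP[_ Fu] := lF0u x Yx; exact: le_trans Fu (uM x).
have [f [fc l'fu']] := functionally_insertion
  (functionally_usc_patch Yfc F0c lusc (fun y Yy => (andP (lF0u y Yy)).1))
  (functionally_lsc_patch Yfc F0c ulsc (fun y Yy => (andP (lF0u y Yy)).2)) l'u' ml' u'M.
exists f; split => //; split => [y Yy|x].
  by apply: le_anti; have := l'fu' y; rewrite /l' /u' mem_set // andbC.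
have := l'fu' x; rewrite /l' /u'; case: ifPn => [/set_mem Yx /andP[Ff fF]|//].
by have /andP[lF Fu] := lF0u x Yx; rewrite (le_trans lF Ff) (le_trans fF Fu).
Qed.

End insertion_extension.

Section ereal_transfer.
Context {R : realType} {X : topologicalType}.
Local Open Scope classical_set_scope.
Local Open Scope ring_scope.

Lemma continuous_contract (k : X -> \bar R) :
  continuous k -> continuous (fun x => contract (k x)).
Proof. by move=> kc x; exact: continuous_comp (kc x) (@contract_continuous _ (k x)). Qed.

Lemma functionally_usc_contract_inf (gn : nat -> X -> \bar R) (g : X -> \bar R) :
  (forall n, continuous (gn n)) ->
  (forall x, g x = ereal_inf (range (fun n => gn n x))) ->
  functionally_usc (fun x => contract (g x)).
Proof.
move=> gnc gE; apply: (functionally_usc_inf (a := fun n x => contract (gn n x))).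
  by move=> n; exact: continuous_contract.
move=> x t; rewrite gE le_contract_ereal_inf; last by exists (gn 0%N x), 0%N.
by split => [tg n|tg _ [n _ <-]]; [apply: tg; exists n|exact: tg].
Qed.

Lemma functionally_lsc_contract_sup (hn : nat -> X -> \bar R) (h : X -> \bar R) :
  (forall n, continuous (hn n)) ->
  (forall x, h x = ereal_sup (range (fun n => hn n x))) ->
  functionally_lsc (fun x => contract (h x)).
Proof.
move=> hnc hE; apply: (functionally_lsc_sup (a := fun n x => contract (hn n x))).
  by move=> n; exact: continuous_contract.
move=> x s; rewrite hE ge_contract_ereal_sup; last by exists (hn 0%N x), 0%N.
by split => [hs n|hs _ [n _ <-]]; [apply: hs; exists n|exact: hs].
Qed.

End ereal_transfer.

Local Open Scope classical_set_scope.
Local Open Scope ereal_scope.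

Theorem proposition2p2 (R : realType) (X : topologicalType) (Y : set X)
  (g h f0 : X -> \bar R) :
  functionally_closed R Y ->
  countable_Hahn_pair g h ->
  continuous f0 ->
  (forall y, Y y -> g y <= f0 y <= h y) ->
  exists f : X -> \bar R, continuous f /\ (forall y, Y y -> f y = f0 y) /\
    (forall x, g x <= f x <= h x).
Proof.
move=> Yfc [gn [hn [gnc [hnc ghn]]]] f0c gf0h.
have gE x : g x = ereal_inf (range (fun n => gn n x)) by case: (ghn x).
have hE x : h x = ereal_sup (range (fun n => hn n x)) by case: (ghn x).
have lu x : (contract (g x) <= contract (h x))%R by rewrite le_contract; case: (ghn x).
have lF0u y : Y y -> (contract (g y) <= contract (f0 y) <= contract (h y))%R.
  by rewrite !le_contract; exact: gf0h.
have [F [Fc [FY lFu]]] := functionally_insertion_extension Yfc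
  (continuous_contract f0c) (functionally_usc_contract_inf gnc gE)
  (functionally_lsc_contract_sup hnc hE) lu
  (fun x => contract_ge_N1 (g x)) (fun x => contract_le_1 (h x)) lF0u.
exists (fun x => expand (F x)); split.
  by move=> x; exact: continuous_comp (Fc x) (@expand_continuous _ (F x)).
split => [y Yy|x]; first by rewrite FY // contractK.
have /andP[gF Fh] := lFu x.
by rewrite -[g x]contractK -[h x]contractK !le_expand.
Qed.
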